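(* If $n$ is a positive even integer, then $$\sum_{k=1}^\infty\frac{5^kF_n^{2k}}{L_n^{2k}(2k-1)(2k)(2k+1)}=\ln 2-\ln(L_n)+\frac{n}{\sqrt5}\,\frac{L_{2n}}{F_{2n}}\ln\alpha-\frac12.$$
   Context: $F_n$ and $L_n$ are the Fibonacci and Lucas numbers: $F_0=0,F_1=1$, $L_0=2,L_1=1$, and both satisfy $X_n=X_{n-1}+X_{n-2}$ (extended to all $n\in\mathbb Z$); equivalently $F_n=(\alpha^n-\beta^n)/(\alpha-\beta)$, $L_n=\alpha^n+\beta^n$ with $\alpha=(1+\sqrt5)/2$, $\beta=(1-\sqrt5)/2$. *)

From Stdlib Require Import Reals Lra Lia Arith.
From Coquelicot Require Import Coquelicot.
Open Scope R_scope.

Fixpoint fib (n : nat) : R :=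
  match n with
  | O => 0
  | S O => 1
  | S ((S m) as p) => fib p + fib m
  end.

Fixpoint lucas (n : nat) : R :=
  match n with
  | O => 2
  | S O => 1
  | S ((S m) as p) => lucas p + lucas m
  end.

Definition alpha : R := (1 + sqrt 5) / 2.

From Stdlib Require Import Reals Lra Lia.
From Coquelicot Require Import Coquelicot.
Open Scope R_scope.

(* Put [x = sqrt 5 F_n / L_n].  The partial fractions
   [2 / ((2k-1) 2k (2k+1)) = 1/(2k-1) - 1/k + 1/(2k+1)]
   reduce the series to [sum y^k/k = - ln (1 - y)] and [sum y^m/(2m+1) = artanh x / x]
   at [y = x^2]; the latter is the odd part of [ln (1 + x) - ln (1 - x)].
   For even [n] Binet's formulas give [beta^n = 1/a] with [a = alpha^n], hence
   [x = (a^2 - 1)/(a^2 + 1) = tanh (ln a)], so that [artanh x = n ln alpha],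
   [1 - x^2 = 4 / L_n^2] and [(1 + x^2) / (2 x) = L_2n / (sqrt 5 F_2n)]. *)

(* Specialised to [R] so that the pointwise goals are real equations for [ring] and [field]. *)
Lemma is_series_ext_R (a b : nat -> R) (l : R) :
  (forall n, a n = b n) -> is_series a l -> is_series b l.
Proof. apply is_series_ext. Qed.

Lemma CV_radius_ge_1 (a : nat -> R) (M : R) :
  (forall k, Rabs (a k) <= M) -> Rbar_le 1 (CV_radius a).
Proof.
  intros Ha. apply (proj1 (CV_radius_bounded a)).
  exists M; intros k. rewrite pow1, Rmult_1_r. apply Ha.
Qed.

Lemma lt_CV_radius_of_bounded (a : nat -> R) (M x : R) :
  (forall k, Rabs (a k) <= M) -> Rabs x < 1 -> Rbar_lt (Rabs x) (CV_radius a).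
Proof.
  intros Ha Hx. apply (Rbar_lt_le_trans _ 1); [exact Hx | exact (CV_radius_ge_1 a M Ha)].
Qed.

Lemma is_derive_zero_const (f : R -> R) :
  (forall t, -1 < t < 1 -> is_derive f t 0) -> forall x, -1 < x < 1 -> f x = f 0.
Proof.
  intros Hd x Hx.
  destruct (Rtotal_order x 0) as [Hlt | [-> | Hgt]]; [| reflexivity |].
  - apply (@eq_is_derive R_NormedModule); [| exact Hlt].
    intros t Ht. apply Hd. lra.
  - symmetry. apply (@eq_is_derive R_NormedModule); [| exact Hgt].
    intros t Ht. apply Hd. lra.
Qed.

(* [inv_nat 0 = 0], since [/ 0 = 0] in Rocq's reals. *)
Definition inv_nat (k : nat) : R := / INR k.

Lemma Rabs_inv_nat_le_1 (k : nat) : Rabs (inv_nat k) <= 1.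
Proof.
  unfold inv_nat. destruct k as [| k].
  - rewrite INR_0, Rinv_0, Rabs_R0. lra.
  - assert (Hk : 1 <= INR (S k)) by (apply (le_INR 1); lia).
    rewrite Rabs_pos_eq by (apply Rlt_le, Rinv_0_lt_compat; lra).
    rewrite <- Rinv_1. apply Rinv_le_contravar; lra.
Qed.

Lemma is_pseries_ln (t : R) : Rabs t < 1 -> is_pseries inv_nat t (- ln (1 - t)).
Proof.
  intros Ht.
  assert (Hrad : forall u, Rabs u < 1 -> Rbar_lt (Rabs u) (CV_radius inv_nat))
    by (intros u; apply lt_CV_radius_of_bounded with 1; apply Rabs_inv_nat_le_1).
  assert (Hderiv : forall u, Rabs u < 1 -> PSeries (PS_derive inv_nat) u = / (1 - u)).
  { intros u Hu. apply is_pseries_unique, is_pseries_R.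
    refine (is_series_ext_R _ _ _ _ (is_series_geom u Hu)).
    intros k. unfold PS_derive, inv_nat. field. apply not_0_INR. lia. }
  set (f u := PSeries inv_nat u + ln (1 - u)).
  assert (Hf : forall u, -1 < u < 1 -> f u = f 0).
  { apply is_derive_zero_const. intros u Hu.
    assert (Hu' : Rabs u < 1) by (apply Rabs_def1; lra).
    replace 0 with (PSeries (PS_derive inv_nat) u + / (1 - u) * (-1))
      by (rewrite Hderiv by exact Hu'; field; lra).
    apply (is_derive_plus (PSeries inv_nat) (fun u => ln (1 - u))).
    - exact (is_derive_PSeries _ _ (Hrad u Hu')).
    - auto_derive; [lra | field; lra]. }
  assert (Hf0 : f 0 = 0).
  { unfold f. rewrite PSeries_0, Rminus_0_r, ln_1, Rplus_0_r. exact Rinv_0. }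
  replace (- ln (1 - t)) with (PSeries inv_nat t).
  - exact (PSeries_correct _ _ (CV_radius_inside _ _ (Hrad t Ht))).
  - assert (Ht1 : -1 < t < 1) by (apply Rabs_def2 in Ht; lra).
    pose proof (Hf t Ht1). unfold f in *. lra.
Qed.

Lemma is_pseries_odd_part (a : nat -> R) (M x l : R) :
  (forall k, Rabs (a k) <= M) -> (forall n, a (2 * n)%nat = 0) ->
  x <> 0 -> Rabs x < 1 -> is_pseries a x l ->
  is_pseries (fun n => a (2 * n + 1)%nat) (x ^ 2) (l / x).
Proof.
  intros Ha Heven Hx0 Hx Hl.
  assert (Hx2 : Rabs (x ^ 2) < 1).
  { rewrite <- RPow_abs. pose proof (Rabs_pos x). nra. }
  set (l2 := PSeries (fun n => a (2 * n + 1)%nat) (x ^ 2)).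
  assert (Hl2 : is_pseries (fun n => a (2 * n + 1)%nat) (x ^ 2) l2).
  { apply PSeries_correct, CV_radius_inside, lt_CV_radius_of_bounded with M; auto. }
  assert (Hl0 : is_pseries (fun n => a (2 * n)%nat) (x ^ 2) 0).
  { pose proof (PSeries_correct (fun _ => 0) (x ^ 2)) as H0.
    rewrite PSeries_const_0 in H0.
    refine (is_pseries_ext _ _ _ _ _ (H0 _)); [intros n; symmetry; apply Heven |].
    apply CV_radius_inside, lt_CV_radius_of_bounded with 0; [| exact Hx2].
    intros; rewrite Rabs_R0; lra. }
  replace (l / x) with l2; [exact Hl2 |].
  assert (E : l = 0 + x * l2).
  { rewrite <- (is_pseries_unique _ _ _ Hl).
    exact (is_pseries_unique _ _ _ (is_pseries_odd_even _ _ _ _ Hl0 Hl2)). }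
  rewrite E. field. exact Hx0.
Qed.

Lemma is_series_atanh (x : R) : 0 < x < 1 ->
  is_series (fun n => (x ^ 2) ^ n / (2 * INR n + 1)) (ln ((1 + x) / (1 - x)) / (2 * x)).
Proof.
  intros Hx.
  assert (Hx1 : Rabs x < 1) by (rewrite Rabs_pos_eq; lra).
  assert (Hmx1 : Rabs (- x) < 1) by (rewrite Rabs_Ropp; exact Hx1).
  set (c k := inv_nat k * (1 - (-1) ^ k)).
  assert (Hc : is_pseries c x (ln (1 + x) - ln (1 - x))).
  { apply is_pseries_R.
    replace (ln (1 + x) - ln (1 - x)) with (- ln (1 - x) - - ln (1 - - x))
      by (replace (1 - - x) with (1 + x) by ring; ring).
    apply (is_series_ext_R (fun k => inv_nat k * x ^ k - inv_nat k * (- x) ^ k)).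
    { intros k. unfold c. replace (- x) with (-1 * x) by ring. rewrite Rpow_mult_distr. ring. }
    apply (is_series_minus (V := R_NormedModule)); apply is_pseries_R, is_pseries_ln; assumption. }
  assert (Hc_bound : forall k, Rabs (c k) <= 2).
  { intros k. unfold c. rewrite Rabs_mult.
    pose proof (Rle_abs ((-1) ^ k)) as Hle. pose proof (Rle_abs (- (-1) ^ k)) as Hge.
    rewrite pow_1_abs in Hle. rewrite Rabs_Ropp, pow_1_abs in Hge.
    rewrite (Rabs_pos_eq (1 - _)) by lra.
    replace 2 with (1 * 2) by ring.
    apply Rmult_le_compat; [apply Rabs_pos | lra | apply Rabs_inv_nat_le_1 | lra]. }
  assert (Hc_even : forall n, c (2 * n)%nat = 0)
    by (intros n; unfold c; rewrite pow_1_even; ring).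
  pose proof (is_pseries_odd_part c 2 x _ Hc_bound Hc_even ltac:(lra) Hx1 Hc) as Hodd.
  apply is_pseries_R in Hodd.
  replace (ln ((1 + x) / (1 - x)) / (2 * x)) with ((ln (1 + x) - ln (1 - x)) / x * / 2)
    by (rewrite ln_div by lra; field; lra).
  refine (is_series_ext_R _ _ _ _ (is_series_scal_r (/ 2) _ _ Hodd)).
  intros n. unfold c, inv_nat. rewrite Nat.add_1_r, pow_1_odd, S_INR, mult_INR.
  simpl. field. pose proof (pos_INR n). lra.
Qed.

Lemma is_series_cubic_denominators (x : R) : 0 < x < 1 ->
  is_series
    (fun m => let k := S m in
       (x ^ 2) ^ k / ((2 * INR k - 1) * (2 * INR k) * (2 * INR k + 1)))
    ((1 + x ^ 2) / (4 * x) * ln ((1 + x) / (1 - x)) + ln (1 - x ^ 2) / 2 - 1 / 2).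
Proof.
  intros Hx.
  set (y := x ^ 2).
  assert (Hy : 0 < y < 1) by (unfold y; nra).
  set (A := ln ((1 + x) / (1 - x)) / (2 * x)).
  pose proof (is_series_atanh x Hx) as Hatanh. fold y A in Hatanh.
  assert (Hprev : is_series (fun m => y ^ S m / (2 * INR (S m) - 1)) (A * y)).
  { refine (is_series_ext_R _ _ _ _ (is_series_scal_r y _ _ Hatanh)).
    intros m. rewrite S_INR. simpl. field. pose proof (pos_INR m). lra. }
  assert (Hmid : is_series (fun m => y ^ S m / INR (S m)) (- ln (1 - y))).
  { apply (is_series_incr_1 (fun k => y ^ k / INR k)).
    change (is_series (fun k => y ^ k / INR k) (- ln (1 - y) + 1 / 0)). rewrite Rdiv_0_r, Rplus_0_r.
    refine (is_series_ext_R _ _ _ _ (proj1 (is_pseries_R _ _ _) (is_pseries_ln y _))).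
    - intros k. unfold inv_nat, Rdiv. ring.
    - rewrite Rabs_pos_eq; lra. }
  assert (Hnext : is_series (fun m => y ^ S m / (2 * INR (S m) + 1)) (A - 1)).
  { apply (is_series_incr_1 (fun k => y ^ k / (2 * INR k + 1))).
    change (is_series (fun k => y ^ k / (2 * INR k + 1)) (A - 1 + 1 / (2 * 0 + 1))).
    replace (A - 1 + 1 / (2 * 0 + 1)) with A by field. exact Hatanh. }
  replace ((1 + y) / (4 * x) * ln ((1 + x) / (1 - x)) + ln (1 - y) / 2 - 1 / 2)
    with (/ 2 * (A * y - - ln (1 - y) + (A - 1))) by (unfold A, y; field; lra).
  apply (is_series_ext_R (fun m =>
    / 2 * (y ^ S m / (2 * INR (S m) - 1) - y ^ S m / INR (S m) + y ^ S m / (2 * INR (S m) + 1)))).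
  { intros m. cbv beta zeta. rewrite S_INR. field. pose proof (pos_INR m). repeat split; lra. }
  apply (is_series_scal_l (V := R_NormedModule)), (is_series_plus (V := R_NormedModule)).
  - exact (is_series_minus (V := R_NormedModule) _ _ _ _ Hprev Hmid).
  - exact Hnext.
Qed.

(* With [a = exp t], [x] is [tanh t]: the sum is [- ln (cosh t) + t coth (2 t) - 1/2]. *)
Lemma is_series_cubic_denominators_tanh (a : R) : 1 < a ->
  let x := (a ^ 2 - 1) / (a ^ 2 + 1) in
  is_series
    (fun m => let k := S m in
       (x ^ 2) ^ k / ((2 * INR k - 1) * (2 * INR k) * (2 * INR k + 1)))
    (ln 2 - ln (a + / a) + (a ^ 2 + / a ^ 2) / (a ^ 2 - / a ^ 2) * ln a - 1 / 2).
Proof.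
  intros Ha x.
  assert (Ha2 : 1 < a ^ 2) by nra.
  assert (Hx : 0 < x < 1).
  { unfold x. split; [apply Rdiv_lt_0_compat; lra |].
    apply (Rdiv_lt_1 (a ^ 2 - 1)); lra. }
  assert (Hcosh : 0 < a + / a) by (pose proof (Rinv_0_lt_compat a ltac:(lra)); lra).
  assert (Hln_ratio : ln ((1 + x) / (1 - x)) = 2 * ln a).
  { replace ((1 + x) / (1 - x)) with (a ^ 2) by (unfold x; field; lra).
    rewrite ln_pow by lra. simpl. ring. }
  assert (Hln_compl : ln (1 - x ^ 2) = 2 * (ln 2 - ln (a + / a))).
  { replace (1 - x ^ 2) with ((2 / (a + / a)) ^ 2) by (unfold x; field; lra).
    rewrite ln_pow, ln_div by (try apply Rdiv_lt_0_compat; lra). simpl. ring. }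
  replace (ln 2 - ln (a + / a) + (a ^ 2 + / a ^ 2) / (a ^ 2 - / a ^ 2) * ln a - 1 / 2)
    with ((1 + x ^ 2) / (4 * x) * ln ((1 + x) / (1 - x)) + ln (1 - x ^ 2) / 2 - 1 / 2).
  { exact (is_series_cubic_denominators x Hx). }
  rewrite Hln_ratio, Hln_compl. unfold x. field.
  assert (Ha4 : 1 < (a * a) ^ 2) by nra.
  repeat split; lra.
Qed.

Definition beta : R := (1 - sqrt 5) / 2.

Lemma sqrt5_pos : 0 < sqrt 5.
Proof. apply sqrt_lt_R0. lra. Qed.

Lemma sqrt5_sq : sqrt 5 * sqrt 5 = 5.
Proof. apply sqrt_sqrt. lra. Qed.

Lemma alpha_gt_1 : 1 < alpha.
Proof.
  unfold alpha. assert (1 < sqrt 5) by (rewrite <- sqrt_1; apply sqrt_lt_1; lra). lra.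
Qed.

Lemma alpha_pow_neq_0 (n : nat) : alpha ^ n <> 0.
Proof. apply pow_nonzero. pose proof alpha_gt_1. lra. Qed.

Lemma alpha_sq : alpha ^ 2 = alpha + 1.
Proof. unfold alpha. pose proof sqrt5_sq. nra. Qed.

Lemma beta_sq : beta ^ 2 = beta + 1.
Proof. unfold beta. pose proof sqrt5_sq. nra. Qed.

Lemma alpha_mul_beta : alpha * beta = -1.
Proof. unfold alpha, beta. pose proof sqrt5_sq. nra. Qed.

Lemma pow_SS_golden (r : R) (n : nat) : r ^ 2 = r + 1 -> r ^ S (S n) = r ^ S n + r ^ n.
Proof.
  intros Hr. replace (r ^ S (S n)) with (r ^ 2 * r ^ n) by (simpl; ring).
  rewrite Hr. simpl. ring.
Qed.

Lemma golden_recurrence_closed_form (u : nat -> R) (p q : R) :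
  (forall n, u (S (S n)) = u (S n) + u n) ->
  u 0%nat = p + q -> u 1%nat = p * alpha + q * beta ->
  forall n, u n = p * alpha ^ n + q * beta ^ n.
Proof.
  intros Hrec H0 H1 n.
  enough (H : u n = p * alpha ^ n + q * beta ^ n /\
              u (S n) = p * alpha ^ S n + q * beta ^ S n) by apply H.
  induction n as [| n [IH IH']].
  - simpl. rewrite H0, H1. split; ring.
  - split; [exact IH' |].
    rewrite Hrec, IH, IH', (pow_SS_golden alpha n alpha_sq), (pow_SS_golden beta n beta_sq).
    ring.
Qed.

Lemma fib_binet (n : nat) : fib n = (alpha ^ n - beta ^ n) / sqrt 5.
Proof.
  pose proof sqrt5_pos.
  rewrite (golden_recurrence_closed_form fib (/ sqrt 5) (- / sqrt 5)).
  - field. lra.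
  - reflexivity.
  - simpl. ring.
  - simpl. unfold alpha, beta. field. lra.
Qed.

Lemma lucas_binet (n : nat) : lucas n = alpha ^ n + beta ^ n.
Proof.
  rewrite (golden_recurrence_closed_form lucas 1 1).
  - ring.
  - reflexivity.
  - simpl. ring.
  - simpl. unfold alpha, beta. field.
Qed.

Lemma beta_pow_even (n : nat) : Nat.Even n -> beta ^ n = / alpha ^ n.
Proof.
  intros [j ->].
  apply (Rmult_eq_reg_l (alpha ^ (2 * j))); [| apply alpha_pow_neq_0].
  rewrite Rinv_r, <- Rpow_mult_distr, alpha_mul_beta by apply alpha_pow_neq_0.
  apply pow_1_even.
Qed.

Lemma lucas_even (n : nat) : Nat.Even n -> lucas n = alpha ^ n + / alpha ^ n.
Proof. intros Hn. rewrite lucas_binet, beta_pow_even by exact Hn. reflexivity. Qed.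

Lemma fib_even (n : nat) : Nat.Even n -> fib n = (alpha ^ n - / alpha ^ n) / sqrt 5.
Proof.
  intros Hn. rewrite fib_binet, beta_pow_even by exact Hn. reflexivity.
Qed.

Lemma fib_div_lucas_sq_even (n : nat) : Nat.Even n ->
  5 * fib n ^ 2 / lucas n ^ 2 = (((alpha ^ n) ^ 2 - 1) / ((alpha ^ n) ^ 2 + 1)) ^ 2.
Proof.
  intros Hn. pose proof sqrt5_pos. pose proof (alpha_pow_neq_0 n).
  rewrite <- sqrt5_sq, lucas_even, fib_even by exact Hn.
  field. repeat split; nra.
Qed.

Theorem theorem10 (n : nat) (Hpos : (0 < n)%nat) (Heven : Nat.Even n) :
  is_series
    (fun m : nat =>
       let k := S m in
       (5 ^ k * fib n ^ (2 * k)) /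
       (lucas n ^ (2 * k) * (2 * INR k - 1) * (2 * INR k) * (2 * INR k + 1)))
    (ln 2 - ln (lucas n)
     + INR n / sqrt 5 * (lucas (2 * n) / fib (2 * n)) * ln alpha - 1 / 2).
Proof.
  pose proof sqrt5_pos.
  assert (Hsq : alpha ^ (2 * n) = (alpha ^ n) ^ 2) by (rewrite <- pow_mult; f_equal; lia).
  assert (Heven2 : Nat.Even (2 * n)) by (exists n; reflexivity).
  pose proof (fib_div_lucas_sq_even n Heven) as Hx2.
  rewrite (lucas_even (2 * n)), (fib_even (2 * n)), Hsq by exact Heven2.
  set (a := alpha ^ n) in *.
  assert (Ha : 1 < a) by (apply Rlt_pow_R1; [exact alpha_gt_1 | lia]).
  assert (HL : lucas n = a + / a) by exact (lucas_even n Heven).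
  replace (ln 2 - ln (lucas n)
           + INR n / sqrt 5 * ((a ^ 2 + / a ^ 2) / ((a ^ 2 - / a ^ 2) / sqrt 5)) * ln alpha - 1 / 2)
    with (ln 2 - ln (a + / a) + (a ^ 2 + / a ^ 2) / (a ^ 2 - / a ^ 2) * ln a - 1 / 2).
  2:{ assert (Hln_a : ln a = INR n * ln alpha) by (apply ln_pow; pose proof alpha_gt_1; lra).
      rewrite HL, Hln_a. field.
      assert (1 < a * a) by nra. assert (1 < (a * a) ^ 2) by nra. repeat split; lra. }
  refine (is_series_ext_R _ _ _ _ (is_series_cubic_denominators_tanh a Ha)).
  intros m. cbv zeta. rewrite <- Hx2. unfold Rdiv. rewrite !Rpow_mult_distr, pow_inv, !pow_mult.
  assert (HL_pos : 0 < lucas n) by (rewrite HL; pose proof (Rinv_0_lt_compat a ltac:(lra)); lra).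
  assert (Hk : 1 <= INR (S m)) by (apply (le_INR 1); lia).
  field. repeat split; try lra. apply pow_nonzero. nra.
Qed.
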